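(* Let $X=\{1,\dots,n\}$, $Y$ finite, $Q$ a symmetric irreducible stochastic matrix on $Y$ (notation in context). Let $0\le k\le h\le n-1$ and let $\underline a=(a_0,\dots,a_m)$ be a type with $a_0+\cdots+a_m=h+1$ and $\ell(\underline a)\le k$; put $\underline a'=(a_0-1,a_1,\dots,a_m)$. Then every $F\in P_{h,\underline a',k}$ satisfies $$\Delta_hF=\big(|Y|(n+\ell(\underline a)-k-h)(h-k+1)-|Y|(n-h)\big)F.$$
   Context: $Q$ acts on $L(Y)$ by $(Qf)(y)=\sum_{y'}q(y,y')f(y')$, with distinct eigenvalues $\lambda_0=1,\dots,\lambda_m$ and eigenspaces $W_0$ (constants), $W_1,\dots,W_m$. For $0\le k\le n$, $\Theta_k$ is the set of functions $\theta$ with $\mathrm{dom}(\theta)$ a $k$-subset of $X$ and values in $Y$ ($\Theta_0$ = empty function); $\varphi\subseteq\theta$ means $\mathrm{dom}\varphi\subseteq\mathrm{dom}\theta$ and $\theta|_{\mathrm{dom}\varphi}=\varphi$. For $1\le k\le n$: $(D_kF)(\varphi)=\sum_{\theta\in\Theta_k:\theta\supseteq\varphi}F(\theta)$ ($D_k:L(\Theta_k)\to L(\Theta_{k-1})$) and $(D_k^*F)(\theta)=\sum_{\varphi\in\Theta_{k-1}:\varphi\subseteq\theta}F(\varphi)$; $D_0:=0$. $\Delta_h$ is the operator on $L(\Theta_h)$ given by $(\Delta_hF)(\theta)=\sum F(\varphi)$, the sum over all $\varphi\in\Theta_h$ with $|\mathrm{dom}\varphi\cap\mathrm{dom}\theta|=h-1$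 and $\varphi=\theta$ on $\mathrm{dom}\varphi\cap\mathrm{dom}\theta$. Types $\underline b=(b_0,\dots,b_m)$, $|\underline b|=\sum b_i$, $\ell(\underline b)=b_1+\cdots+b_m$, $\underline b'=(b_0-1,b_1,\dots,b_m)$. A fundamental function of type $\underline b$ on $A$, $|A|=|\underline b|$, is $F=\bigotimes_{j\in A}F^j$ ($F(\theta)=\prod_{j\in A}F^j(\theta(j))$ on $Y^A$, $0$ elsewhere) with each $F^j$ in some $W_{i_j}$ and exactly $b_i$ indices with $i_j=i$; $P_{k,\underline b,A}$ is their span, $P_{k,\underline b}=\bigoplus_{|A|=k}P_{k,\underline b,A}$ ($\{0\}$ if an entry is negative). $D_{k,\underline b}=D_k|_{P_{k,\underline b}}$, $D^*_{k,\underline b}=D^*_k|_{P_{k-1,\underline b'}}$. For $|\underline b|=k$: $P_{k,\underline b,k}=\ker D_{k,\underline b}$; for $k<h\le n$, $|\underline b|=h$, $\ell(\underline b)\le k$: $P_{h,\underline b,k}=D^*_{h,\underline b}(P_{h-1,\underline b',k})$. *)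

From HB Require Import structures.
From mathcomp Require Import all_boot all_order all_algebra.
From mathcomp Require Import reals.
Set Implicit Arguments. Unset Strict Implicit. Unset Printing Implicit Defensive.
Import Order.TTheory GRing.Theory Num.Theory.
Local Open Scope ring_scope.

Section Defs.
Variables (R : realType) (Y : finType).

Definition Qop (q : Y -> Y -> R) (f : Y -> R) : Y -> R :=
  fun y => \sum_(y' : Y) q y y' * f y'.

Fixpoint qpow (q : Y -> Y -> R) (t : nat) : Y -> Y -> R :=
  match t with
  | 0 => fun y y' => (y == y')%:R
  | t'.+1 => fun y y' => \sum_(z : Y) q y z * qpow q t' z y'
  end.

Definition Qsymmetric (q : Y -> Y -> R) := forall y y', q y y' = q y' y.
Definition Qstochastic (q : Y -> Y -> R) :=
  (forall y y', 0 <= q y y') /\ (forall y, \sum_(y' : Y) q y y' = 1).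
Definition Qirreducible (q : Y -> Y -> R) :=
  forall y y', exists t, 0 < qpow q t y y'.

Definition inW (q : Y -> Y -> R) (mu : R) (f : Y -> R) :=
  forall y, Qop q f y = mu * f y.
Definition is_eigenvalue (q : Y -> Y -> R) (mu : R) :=
  exists f : Y -> R, (exists y, f y != 0) /\ inW q mu f.

(** lam_0 = 1, lam_1, ..., lam_m is an enumeration of the distinct eigenvalues
    of Q; W_i := eigenspace of lam_i. *)
Definition eigen_enum (q : Y -> Y -> R) (m : nat) (lam : 'I_m.+1 -> R) :=
  [/\ injective lam, lam ord0 = 1, (forall i, is_eigenvalue q (lam i))
    & (forall mu, is_eigenvalue q mu -> exists i, mu = lam i)].

Variable n : nat.

Definition PF := {ffun 'I_n -> option Y}.
Definition dom (t : PF) : {set 'I_n} := [set x | t x != None].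
Definition inTheta (k : nat) (t : PF) : bool := #|dom t| == k.
Definition psub (p t : PF) : bool := [forall x, (p x != None) ==> (p x == t x)].

(** D_k : L(Theta_k) -> L(Theta_{k-1}); D_0 := 0.  Functions on Theta_j are
    represented as functions PF -> R (only values on Theta_j matter). *)
Definition Dop (k : nat) (F : PF -> R) : PF -> R := fun p =>
  match k with
  | 0 => 0
  | k'.+1 => if inTheta k' p then \sum_(t : PF | inTheta k t && psub p t) F t
             else 0
  end.

Definition Dadj (k : nat) (F : PF -> R) : PF -> R := fun t =>
  if inTheta k t then \sum_(p : PF | inTheta k.-1 p && psub p t) F p else 0.

Definition Delta (h : nat) (F : PF -> R) : PF -> R := fun t =>
  \sum_(p : PF | [&& inTheta h p, #|dom p :&: dom t|.+1 == h
                    & [forall x in dom p :&: dom t, p x == t x]]) F p.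

Variable m : nat.

(** Types b = (b_0,...,b_m), integer valued so that b' may have b_0 - 1 < 0. *)
Definition type := 'I_m.+1 -> int.
Definition type_size (b : type) : int := \sum_(i < m.+1) b i.
Definition type_ell (b : type) : int := \sum_(i < m.+1 | i != ord0) b i.
Definition tprime (b : type) : type :=
  fun i => if i == ord0 then b i - 1 else b i.

Variables (q : Y -> Y -> R) (lam : 'I_m.+1 -> R).

(** F is a fundamental function of type b on A. (If some b_i < 0 there is
    none, so the spans below are {0}, as in the paper.) *)
Definition fundamental (b : type) (A : {set 'I_n}) (F : PF -> R) : Prop :=
  #|A|%:Z = type_size b /\
  exists (ix : 'I_n -> 'I_m.+1) (Fj : 'I_n -> Y -> R),
    [/\ (forall j, j \in A -> inW q (lam (ix j)) (Fj j)),
        (forall i, #|[set j in A | ix j == i]|%:Z = b i)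
      & (forall t, F t = if dom t == A then \prod_(j in A) oapp (Fj j) 0 (t j)
                         else 0)].

Definition span_of (S : (PF -> R) -> Prop) (F : PF -> R) : Prop :=
  exists (N : nat) (fs : 'I_N -> PF -> R) (cs : 'I_N -> R),
    (forall i, S (fs i)) /\ forall t, F t = \sum_(i < N) cs i * fs i t.

Definition Pkb (k : nat) (b : type) (F : PF -> R) : Prop :=
  span_of (fun G => exists A : {set 'I_n}, #|A| = k /\ fundamental b A G) F.

(** P_{k+d,b,k}, by recursion on d:
    P_{k,b,k} = ker D_{k,b};  P_{h,b,k} = D^*_{h,b}(P_{h-1,b',k}). *)
Fixpoint Pd (d : nat) (b : type) (k : nat) (F : PF -> R) : Prop :=
  match d with
  | 0 => Pkb k b F /\ (forall p, Dop k F p = 0)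
  | d'.+1 => exists G, [/\ Pkb (k + d') (tprime b) G, Pd d' (tprime b) k G
                          & forall t, F t = Dadj (k + d) G t]
  end.

(** P_{h,b,k} (meaningful for k <= h). *)
Definition Phbk (h : nat) (b : type) (k : nat) (F : PF -> R) : Prop :=
  Pd (h - k) b k F.

End Defs.

(* Let S resample one value of a partial function inside its domain:
   (S F)(t) = sum over x in dom t and y in Y of F(t[x := y]). Then
   D_k^* D_k = S + Delta_k on Theta_k and D_{k+1} D_{k+1}^* = Delta_k + |Y|(n - k)
   on Theta_k, while S D_{k+1}^* = D_{k+1}^* (S + |Y|).  A fundamental function
   of type b is an eigenfunction of S for b_0 |Y|: a factor in W_0 is constant
   (irreducibility), a factor in W_i, i > 0, has zero sum (symmetry).  Hence
   Delta = -b_0 |Y| on ker D, and every application of D^* changes the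
   eigenvalue of Delta in a computable way: on P_{k+d,b,k} it is
   |Y| (d (n - k) + d - (d + 1) b_0), which is the claim for b = a', d = h - k. *)

From HB Require Import structures.
From mathcomp Require Import all_boot all_order all_algebra.
From mathcomp Require Import reals.
From mathcomp Require Import ring.
Set Implicit Arguments. Unset Strict Implicit. Unset Printing Implicit Defensive.
Import Order.TTheory GRing.Theory Num.Theory.
Local Open Scope ring_scope.

Lemma big_reindex_in (R : Type) (idx : R) (op : Monoid.com_law idx)
    (I J : finType) (P : pred I) (Q : pred J) (g : J -> I) (F : I -> R) :
  {in Q &, injective g} -> (forall j, Q j -> P (g j)) ->
  (forall i, P i -> exists2 j, Q j & g j = i) ->
  \big[op/idx]_(i | P i) F i = \big[op/idx]_(j | Q j) F (g j).
Proof.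
move=> g_inj gQP g_onto; rewrite -(big_imset _ g_inj) /=; apply: eq_bigl => i.
by apply/idP/imsetP => [/g_onto[j Qj <-]|[j Qj ->]]; [exists j | apply: gQP].
Qed.

Section PartialFunctions.
Variables (Y : finType) (n : nat).
Local Notation PF := (PF Y n).
Implicit Types (t p : PF) (x z : 'I_n).

Definition pf_rem t x : PF := [ffun i => if i == x then None else t i].
Definition pf_upd t x (v : option Y) : PF := [ffun i => if i == x then v else t i].

Lemma in_dom t x : (x \in dom t) = (t x != None).
Proof. by rewrite inE. Qed.

Lemma notin_dom t x : (x \notin dom t) = (t x == None).
Proof. by rewrite inE negbK. Qed.

Lemma dom_rem t x : dom (pf_rem t x) = dom t :\ x.
Proof. by apply/setP=> i; rewrite !inE ffunE; case: (i =P x). Qed.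

Lemma dom_upd t x y : dom (pf_upd t x (Some y)) = x |: dom t.
Proof. by apply/setP=> i; rewrite !inE ffunE; case: (i =P x). Qed.

Lemma dom_upd_in t x y : x \in dom t -> dom (pf_upd t x (Some y)) = dom t.
Proof. by move=> xt; rewrite dom_upd; apply/setUidPr; rewrite sub1set. Qed.

Lemma rem_upd t x v : t x = None -> pf_rem (pf_upd t x v) x = t.
Proof. by move=> tx; apply/ffunP=> i; rewrite !ffunE; case: (i =P x) => // ->. Qed.

Lemma rem_upd_id t x v : pf_rem (pf_upd t x v) x = pf_rem t x.
Proof. by apply/ffunP=> i; rewrite !ffunE; case: (i =P x). Qed.

Lemma rem_updC t x z v : x != z -> pf_rem (pf_upd t z v) x = pf_upd (pf_rem t x) z v.
Proof.
move=> xz; apply/ffunP=> i; rewrite !ffunE.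
by case: (eqVneq i x) => [->|]; rewrite ?(negbTE xz).
Qed.

Lemma upd_rem t x v : pf_upd (pf_rem t x) x v = pf_upd t x v.
Proof. by apply/ffunP=> i; rewrite !ffunE; case: (i =P x). Qed.

Lemma card_dom_leq t : (#|dom t| <= n)%N.
Proof. by rewrite -[n in (_ <= n)%N]card_ord max_card. Qed.

Lemma inTheta_rem j t x : inTheta j.+1 t -> x \in dom t -> inTheta j (pf_rem t x).
Proof. by rewrite /inTheta dom_rem (cardsD1 x (dom t)) => + xt; rewrite xt. Qed.

Lemma inTheta_upd j t x y : inTheta j t -> x \notin dom t ->
  inTheta j.+1 (pf_upd t x (Some y)).
Proof. by move=> /eqP tj xt; rewrite /inTheta dom_upd cardsU1 xt tj. Qed.

Lemma psubP p t : reflect (forall x, p x != None -> p x = t x) (psub p t).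
Proof.
apply: (iffP forallP) => [H x px | H x]; first by apply/eqP; move/implyP: (H x); apply.
by apply/implyP=> px; rewrite (H x px).
Qed.

Lemma psub_dom p t : psub p t -> dom p \subset dom t.
Proof. by move/psubP=> pt; apply/subsetP=> x; rewrite !in_dom => px; rewrite -pt. Qed.

Lemma psub_upd t x y : t x = None -> psub t (pf_upd t x (Some y)).
Proof. by move=> tx; apply/psubP=> i; rewrite ffunE; case: (i =P x) => // ->; rewrite tx. Qed.

Lemma psub_rem t x : psub (pf_rem t x) t.
Proof. by apply/psubP=> i; rewrite ffunE; case: (i =P x). Qed.

Lemma psub_card_succ p t : psub p t -> #|dom t| = (#|dom p|).+1 ->
  exists x y, p x = None /\ t = pf_upd p x (Some y).
Proof.
move=> pt ct; have [x Ex] : exists x, dom t :\: dom p = [set x].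
  by apply/cards1P; rewrite cardsD (setIidPr (psub_dom pt)) ct subSnn.
have /setDP[xt xp] : x \in dom t :\: dom p by rewrite Ex set11.
move: xt; rewrite in_dom; case tx: (t x) => [y|] // _.
exists x, y; split; first by apply/eqP; rewrite -notin_dom.
apply/ffunP=> i; rewrite ffunE; case: (i =P x) => [-> //|/eqP ix].
have [ip|ip] := boolP (i \in dom p); first by rewrite ((psubP _ _ pt) i) -?in_dom.
have : i \notin dom t :\: dom p by rewrite Ex inE.
by rewrite in_setD ip /= notin_dom => /eqP ->; move: ip; rewrite notin_dom => /eqP.
Qed.

Lemma Delta_nbr h t p : inTheta h t ->
  [&& inTheta h p, #|dom p :&: dom t|.+1 == h
    & [forall x in dom p :&: dom t, p x == t x]] ->
  exists x z y, [/\ x \in dom t, z \notin dom t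
                  & p = pf_upd (pf_rem t x) z (Some y)].
Proof.
move=> /eqP th /and3P[/eqP hp /eqP hI /forallP agree].
pose c : PF := [ffun i => if i \in dom p then t i else None].
have dc : dom c = dom p :&: dom t.
  apply/setP=> i; rewrite in_setI [i \in dom c]in_dom ffunE.
  by case: (i \in dom p); rewrite //= in_dom.
have ct : psub c t by apply/psubP=> i; rewrite ffunE; case: ifP.
have cp : psub c p.
  apply/psubP=> i ci; have /implyP := agree i; rewrite -dc in_dom ci => /(_ isT) /eqP ->.
  by move: ci; rewrite !ffunE; case: ifP.
have [|x [y1 [cx Et]]] := psub_card_succ ct; first by rewrite th dc hI.
have [|z [y [cz Ep]]] := psub_card_succ cp; first by rewrite hp dc hI.
exists x, z, y; split; first by rewrite Et dom_upd setU11.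
  have : z \notin dom c by rewrite notin_dom cz.
  by rewrite dc in_setI Ep dom_upd setU11.
by rewrite Et rem_upd.
Qed.

End PartialFunctions.

Section NeighbourSums.
Variables (R : realType) (Y : finType) (n : nat).
Local Notation PF := (PF Y n).
Implicit Types (t p : PF) (F G : PF -> R).

Lemma Dadj_rem j G t : inTheta j.+1 t ->
  Dadj j.+1 G t = \sum_(x in dom t) G (pf_rem t x).
Proof.
move=> tj; rewrite /Dadj tj; apply: big_reindex_in.
- move=> x1 x2 x1t _ E; have := congr1 (fun f : PF => f x1) E.
  rewrite /= !ffunE eqxx; case: (x1 =P x2) => // _ t1.
  by move: x1t; rewrite in_dom -t1.
- by move=> x xt /=; rewrite inTheta_rem // psub_rem.
move=> p /andP[/eqP pj pt].
have [|x [y [px ->]]] := psub_card_succ pt; first by rewrite (eqP tj) pj.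
by exists x; rewrite ?rem_upd // dom_upd setU11.
Qed.

Lemma Dop_upd j F p : inTheta j p ->
  Dop j.+1 F p = \sum_(x in ~: dom p) \sum_(y : Y) F (pf_upd p x (Some y)).
Proof.
move=> pj; rewrite /Dop pj pair_big_dep /=.
under [RHS]eq_bigl do rewrite andbT in_setC.
apply: big_reindex_in.
- move=> [x1 y1] [x2 y2] /= x1p _ E.
  have := congr1 (fun f : PF => f x1) E; rewrite /= !ffunE eqxx.
  case: (x1 =P x2) => [<- [->] //|_ E1].
  by move: x1p; rewrite unfold_in /= notin_dom -E1.
- move=> [x y] /= xp; rewrite inTheta_upd // psub_upd //.
  by apply/eqP; rewrite -notin_dom.
move=> t /andP[/eqP tj pt].
have [|x [y [px ->]]] := psub_card_succ pt; first by rewrite tj (eqP pj).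
by exists (x, y); rewrite //= notin_dom px.
Qed.

Lemma Delta_rem_upd h F t : inTheta h t ->
  Delta h F t = \sum_(x in dom t) \sum_(z in ~: dom t) \sum_(y : Y)
                  F (pf_upd (pf_rem t x) z (Some y)).
Proof.
move=> th; under [RHS]eq_bigr do rewrite pair_big_dep /=.
rewrite /Delta pair_big_dep /=; under [RHS]eq_bigl do rewrite andbT in_setC.
apply: big_reindex_in.
- move=> [x1 [z1 y1]] [x2 [z2 y2]] /andP[/= x1t z1t] /andP[/= x2t z2t] E.
  have := congr1 (fun f : PF => f z1) E; rewrite /= !ffunE eqxx.
  case: (z1 =P z2) => [ez [ey]|_]; last first.
    case: (z1 =P x2) => [e|_]; first by rewrite e x2t in z1t.
    by move: z1t; rewrite notin_dom => /eqP ->.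
  subst z2 y2; have := congr1 (fun f : PF => f x1) E; rewrite /= !ffunE eqxx.
  have /negbTE -> : x1 != z1 by apply: contraNneq z1t => <-.
  case: (x1 =P x2) => [<- //|_ t1].
  by move: x1t; rewrite in_dom -t1.
- move=> [x [z y]] /andP[/= xt zt].
  have meet : dom (pf_upd (pf_rem t x) z (Some y)) :&: dom t = dom t :\ x.
    apply/setP=> i; rewrite dom_upd dom_rem !inE.
    case: (i =P z) => [->|_] /=; last by rewrite -andbA andbb.
    by move: zt; rewrite notin_dom => /eqP ->; rewrite andbF.
  have cD : #|dom t :\ x|.+1 = h by rewrite -(eqP th) (cardsD1 x (dom t)) xt.
  rewrite meet cD eqxx /inTheta dom_upd dom_rem cardsU1 in_setD1 negb_and zt orbT.
  rewrite add1n cD eqxx; apply/forallP=> i; apply/implyP; rewrite in_setD1.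
  case/andP=> /negbTE ix it; rewrite !ffunE ix.
  by case: (i =P z) => [iz|//]; rewrite -iz it in zt.
move=> p /(Delta_nbr th)[x [z [y [xt zt ->]]]].
by exists (x, (z, y)); rewrite //= xt.
Qed.

Definition Sop F t := \sum_(x in dom t) \sum_(y : Y) F (pf_upd t x (Some y)).

Definition Sop_eigen j beta F := forall t, inTheta j t -> Sop F t = beta * F t.

Lemma eq_Delta h F G : F =1 G -> Delta h F =1 Delta h G.
Proof. by move=> FG t; apply: eq_bigr => p _. Qed.

Lemma Sop_eigen_lincomb j beta N (fs : 'I_N -> PF -> R) (cs : 'I_N -> R) F :
  (forall i, Sop_eigen j beta (fs i)) -> (forall t, F t = \sum_(i < N) cs i * fs i t) ->
  Sop_eigen j beta F.
Proof.
move=> Sfs FE t tj; rewrite /Sop FE big_distrr /=.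
under eq_bigr do under eq_bigr do rewrite FE.
under eq_bigr do rewrite exchange_big /=.
rewrite exchange_big /=; apply: eq_bigr => i _.
under eq_bigr do rewrite -big_distrr /=.
by rewrite -big_distrr /= -/(Sop (fs i) t) Sfs // mulrCA.
Qed.

Lemma Dadj_Dop j F t : inTheta j.+1 t ->
  Dadj j.+1 (Dop j.+1 F) t = Sop F t + Delta j.+1 F t.
Proof.
move=> tj; rewrite Dadj_rem // Delta_rem_upd // /Sop -big_split.
apply: eq_bigr => x xt; rewrite Dop_upd ?inTheta_rem // dom_rem setCD setUC.
rewrite big_setU1 ?in_setC ?negbK //=.
by under eq_bigr do rewrite upd_rem.
Qed.

Lemma Dop_Dadj j F t : inTheta j t ->
  Dop j.+1 (Dadj j.+1 F) t = Delta j F t + #|Y|%:R * (n%:R - j%:R) * F t.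
Proof.
move=> tj; rewrite Dop_upd // Delta_rem_upd // addrC.
have Dadj_upd z y : z \in ~: dom t -> Dadj j.+1 F (pf_upd t z (Some y)) =
    F t + \sum_(x in dom t) F (pf_upd (pf_rem t x) z (Some y)).
  rewrite in_setC => zt; rewrite Dadj_rem ?inTheta_upd // dom_upd big_setU1 //=.
  rewrite rem_upd; last by apply/eqP; rewrite -notin_dom.
  congr (_ + _); apply: eq_bigr => x xt.
  by rewrite rem_updC //; apply: contraNneq zt => <-.
rewrite (eq_bigr _ (fun z zt => eq_bigr _ (fun y _ => Dadj_upd z y zt))).
under eq_bigr do rewrite big_split /=.
rewrite big_split /=; congr (_ + _); last first.
  by under eq_bigr do rewrite exchange_big /=; rewrite exchange_big.
have card_codom : #|~: dom t| = (n - j)%N.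
  by rewrite -[n in (n - j)%N]card_ord -(cardsC (dom t)) (eqP tj) addKn.
rewrite (eq_bigr (fun=> F t *+ #|Y|)) => [|z _]; last by rewrite sumr_const.
rewrite sumr_const card_codom -mulrnA -[LHS]mulr_natl natrM natrB //.
by rewrite -(eqP tj) card_dom_leq.
Qed.

Lemma Dadj_scale_on j c F G : (forall s, inTheta j s -> F s = c * G s) ->
  forall t, Dadj j.+1 F t = c * Dadj j.+1 G t.
Proof.
move=> FG t; rewrite /Dadj; case: ifP => _; last by rewrite mulr0.
by rewrite big_distrr; apply: eq_bigr => p /andP[pj _]; apply: FG.
Qed.

Lemma Sop_eigen_Dadj j beta G :
  Sop_eigen j beta G -> Sop_eigen j.+1 (beta + #|Y|%:R) (Dadj j.+1 G).
Proof.
move=> SG t tj; rewrite Dadj_rem // /Sop.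
have Dadj_upd x y : x \in dom t -> Dadj j.+1 G (pf_upd t x (Some y)) =
    G (pf_rem t x) + \sum_(z in dom t | z != x) G (pf_upd (pf_rem t z) x (Some y)).
  move=> xt; rewrite Dadj_rem; last by rewrite /inTheta dom_upd_in.
  rewrite dom_upd_in // (bigD1 x) //= rem_upd_id; congr (_ + _).
  by apply: eq_bigr => z /andP[_ zx]; rewrite rem_updC.
rewrite (eq_bigr _ (fun x xt => eq_bigr _ (fun y _ => Dadj_upd x y xt))).
under eq_bigr do rewrite big_split /=.
rewrite big_split /= mulrDl addrC !big_distrr /=; congr (_ + _); last first.
  by apply: eq_bigr => x _; rewrite sumr_const mulr_natl.
under eq_bigr do rewrite exchange_big /=.
rewrite (exchange_big_dep (mem (dom t))) /=; last by move=> ? ? _ /andP[].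
apply: eq_bigr => z zt; rewrite -SG ?inTheta_rem // /Sop dom_rem.
by apply: eq_bigl => x; rewrite in_setD1 zt eq_sym andbC.
Qed.

Lemma Delta_ker k beta F : Sop_eigen k beta F -> (forall p, Dop k F p = 0) ->
  forall t, inTheta k t -> Delta k F t = - beta * F t.
Proof.
case: k => [|j] SF DF t tk.
  have dom0 : dom t = set0 by apply/cards0_eq/eqP.
  rewrite mulNr -SF // /Sop dom0 big_set0 oppr0 /Delta big_pred0 // => p.
  by rewrite andbF.
have := Dadj_Dop F tk; rewrite SF // {1}/Dadj tk big1 => [|p _]; last exact: DF.
by move/eqP; rewrite eq_sym addrC addr_eq0 mulNr => /eqP.
Qed.

Lemma Delta_Dadj j beta mu G : Sop_eigen j beta G ->
  (forall s, inTheta j s -> Delta j G s = mu * G s) ->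
  forall t, inTheta j.+1 t -> Delta j.+1 (Dadj j.+1 G) t =
    (mu + #|Y|%:R * (n%:R - j%:R) - beta - #|Y|%:R) * Dadj j.+1 G t.
Proof.
move=> SG DG t tj.
have DDadjG s : inTheta j s ->
    Dop j.+1 (Dadj j.+1 G) s = (mu + #|Y|%:R * (n%:R - j%:R)) * G s.
  by move=> sj; rewrite Dop_Dadj // DG // mulrDl.
have := Dadj_Dop (Dadj j.+1 G) tj.
rewrite (Dadj_scale_on DDadjG) (Sop_eigen_Dadj SG) // => E.
by apply: (addrI ((beta + #|Y|%:R) * Dadj j.+1 G t)); rewrite -E; ring.
Qed.

End NeighbourSums.

Section Eigenfunctions.
Variables (R : realType) (Y : finType) (q : Y -> Y -> R).
Implicit Type f : Y -> R.

Lemma harmonic_max_step f z z' : Qstochastic q -> inW q 1 f ->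
  (forall w, f w <= f z) -> 0 < q z z' -> f z' = f z.
Proof.
move=> [q_ge0 q_sum1] fW fz_max qzz'.
have avg0 : \sum_(w : Y) q z w * (f z - f w) = 0.
  under eq_bigr do rewrite mulrBr.
  by rewrite sumrB -big_distrl /= q_sum1 mul1r -/(Qop q f z) fW mul1r subrr.
have /eqP : q z z' * (f z - f z') = 0.
  apply: (psumr_eq0P _ avg0) => // w _.
  by rewrite mulr_ge0 // subr_ge0.
by rewrite mulf_eq0 gt_eqF //= subr_eq0 => /eqP.
Qed.

Lemma harmonic_const f : Qstochastic q -> Qirreducible q -> inW q 1 f ->
  forall y y', f y = f y'.
Proof.
move=> qst qirr fW y y'.
have [y0 _ y0_max] := @arg_maxP _ _ Y y predT f isT.
have reach t z z' : f z = f y0 -> 0 < qpow q t z z' -> f z' = f y0.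
  elim: t z => [|t IH] z /= fz; first by case: (z =P z') => [<- //|_]; rewrite ltxx.
  move=> qtzz'; have [w qzw_qtwz'] : exists w, 0 < q z w * qpow q t w z'.
    apply/existsP; apply: contraTT qtzz'; rewrite negb_exists -leNgt => /forallP le0.
    by apply: sumr_le0 => w _; rewrite leNgt le0.
  have qzw : 0 < q z w.
    by rewrite lt0r qst.1 andbT; apply: contraTneq qzw_qtwz' => ->; rewrite mul0r ltxx.
  apply: (IH w); last by rewrite -(pmulr_rgt0 _ qzw).
  by rewrite (@harmonic_max_step f z w qst fW) // fz => v; apply: y0_max.
have [t1 q1] := qirr y0 y; have [t2 q2] := qirr y0 y'.
by rewrite (reach t1 y0 y) // (reach t2 y0 y').
Qed.

Lemma eigen_sum_eq0 f mu : Qsymmetric q -> Qstochastic q -> inW q mu f -> mu != 1 ->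
  \sum_(y : Y) f y = 0.
Proof.
move=> qsym [_ q_sum1] fW mu1.
have Qop_sum : \sum_(y : Y) Qop q f y = \sum_(y : Y) f y.
  rewrite /Qop exchange_big /=; apply: eq_bigr => y' _.
  by rewrite -big_distrl /= (eq_bigr _ (fun y _ => qsym y y')) q_sum1 mul1r.
have /eqP : (mu - 1) * \sum_(y : Y) f y = 0.
  by rewrite mulrBl mul1r big_distrr /= -Qop_sum (eq_bigr _ (fun y _ => fW y)) subrr.
by rewrite mulf_eq0 subr_eq0 (negbTE mu1) => /eqP.
Qed.

Lemma eigen_sum m (lam : 'I_m.+1 -> R) i f y0 :
  Qsymmetric q -> Qstochastic q -> Qirreducible q -> eigen_enum q lam ->
  inW q (lam i) f -> \sum_(y : Y) f y = (i == ord0)%:R * #|Y|%:R * f y0.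
Proof.
move=> qsym qst qirr [lam_inj lam0 _ _] fW; have [i0 | i0] := eqVneq i ord0.
  rewrite i0 lam0 in fW; rewrite mul1r mulr_natl -sumr_const.
  by apply: eq_bigr => y _; apply: harmonic_const.
rewrite !mul0r (eigen_sum_eq0 qsym qst fW) //.
by apply: contraNneq i0; rewrite -lam0 => /lam_inj ->.
Qed.

End Eigenfunctions.

Section Fundamental.
Variables (R : realType) (Y : finType) (n m : nat).
Variables (q : Y -> Y -> R) (lam : 'I_m.+1 -> R).
Hypotheses (qsym : Qsymmetric q) (qst : Qstochastic q) (qirr : Qirreducible q).
Hypothesis lam_enum : eigen_enum q lam.
Local Notation PF := (PF Y n).

Lemma sum_upd_prod_eigen (A : {set 'I_n}) (ix : 'I_n -> 'I_m.+1)
    (Fj : 'I_n -> Y -> R) (t : PF) x y0 :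
  (forall j, j \in A -> inW q (lam (ix j)) (Fj j)) -> x \in A -> t x = Some y0 ->
  \sum_(y : Y) \prod_(j in A) oapp (Fj j) 0 (pf_upd t x (Some y) j) =
  (ix x == ord0)%:R * #|Y|%:R * \prod_(j in A) oapp (Fj j) 0 (t j).
Proof.
move=> FjW xA tx.
have prod_upd y : \prod_(j in A) oapp (Fj j) 0 (pf_upd t x (Some y) j) =
    Fj x y * \prod_(j in A | j != x) oapp (Fj j) 0 (t j).
  rewrite (bigD1 x) //= ffunE eqxx; congr (_ * _).
  by apply: eq_bigr => j /andP[_ /negbTE jx]; rewrite ffunE jx.
rewrite (eq_bigr _ (fun y _ => prod_upd y)) -big_distrl /=.
rewrite (eigen_sum y0 qsym qst qirr lam_enum (FjW x xA)) (bigD1 x xA) //= tx.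
by rewrite mulrA.
Qed.

Lemma fundamental_Sop_eigen b A (F : PF -> R) :
  fundamental q lam b A F -> Sop_eigen #|A| ((b ord0)%:~R * #|Y|%:R) F.
Proof.
move=> [_ [ix [Fj [FjW card_ix FE]]]] t /eqP tA; rewrite /Sop.
have [dA|dA] := eqVneq (dom t) A; last first.
  rewrite FE (negbTE dA) mulr0 big1 // => x xt; apply: big1 => y _.
  by rewrite FE dom_upd_in // (negbTE dA).
rewrite (eq_bigr (fun x => (ix x == ord0)%:R * #|Y|%:R * F t)) => [|x xt].
  rewrite -!big_distrl /= -natr_sum -card_ix -pmulrn dA; congr (_%:R * _ * _).
  rewrite -sum1_card big_mkcond [RHS]big_mkcond /=.
  by apply: eq_bigr => x _; rewrite inE; case: (x \in A); case: (ix x == ord0).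
move: (xt); rewrite in_dom; case tx: (t x) => [y0|] // _.
under eq_bigr do rewrite FE dom_upd_in // dA eqxx.
by rewrite (sum_upd_prod_eigen FjW _ tx) -?dA // FE dA eqxx.
Qed.

Lemma Pkb_Sop_eigen k b (F : PF -> R) :
  Pkb q lam k b F -> Sop_eigen k ((b ord0)%:~R * #|Y|%:R) F.
Proof.
move=> [N [fs [cs [fs_fund FE]]]]; apply: (Sop_eigen_lincomb _ FE) => i.
by have [A [<- fund]] := fs_fund i; apply: fundamental_Sop_eigen.
Qed.

Lemma Pd_Delta k d b (F : PF -> R) : Pd q lam d b k F ->
  forall t, inTheta (k + d) t -> Delta (k + d) F t =
    #|Y|%:R * (d%:R * (n%:R - k%:R) + d%:R - (d%:R + 1) * (b ord0)%:~R) * F t.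
Proof.
elim: d b F => [|d IH] b F.
  move=> [PF DF] t; rewrite addn0 => tk.
  by rewrite (Delta_ker (Pkb_Sop_eigen PF) DF) //; ring.
move=> [G [PG PdG FE]] t; rewrite addnS in FE * => tj.
rewrite (eq_Delta _ FE) FE (Delta_Dadj (Pkb_Sop_eigen PG) (IH _ _ PdG)) //.
by rewrite /tprime eqxx rmorphB natrD; ring.
Qed.

End Fundamental.

Unset Implicit Arguments.
Set Strict Implicit.

Theorem corollary7p9 (R : realType) (Y : finType) (q : Y -> Y -> R)
  (m : nat) (lam : 'I_m.+1 -> R) (n k h : nat) (a : 'I_m.+1 -> int) :
  Qsymmetric q -> Qstochastic q -> Qirreducible q -> eigen_enum q lam ->
  (k <= h)%N -> (h < n)%N ->
  (forall i, 0 <= a i) -> type_size a = (h.+1)%:Z -> type_ell a <= k%:Z ->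
  forall F : PF Y n -> R, @Phbk R Y n m q lam h (tprime a) k F ->
  forall t : PF Y n, inTheta h t ->
    @Delta R Y n h F t =
      (#|Y|%:R * ((n%:R + (type_ell a)%:~R - k%:R - h%:R) * (h%:R - k%:R + 1))
       - #|Y|%:R * (n%:R - h%:R)) * F t.
Proof.
move=> qsym qst qirr lam_enum kh _ _ size_a _ F PF t th.
have := Pd_Delta qsym qst qirr lam_enum PF; rewrite subnKC // => -> //.
have a0 : a ord0 = h.+1%:Z - type_ell a.
  by rewrite -size_a /type_size (bigD1 ord0) //= addrK.
rewrite /tprime eqxx a0 natrB // !rmorphB /= -[h.+1]addn1 PoszD rmorphD /=.
by congr (_ * F t); ring.
Qed.
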